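(* Let $r\ge 3$ and let $G$ be a graph of order $n$ containing no complete subgraph $K_{r+1}$. Then $q_n(G)<\left(1-\frac{3}{3r-1}\right)n$, where $q_n(G)$ is the smallest eigenvalue of the signless Laplacian of $G$.
   Context: Graphs are finite and simple with $n\ge 1$ vertices. For a graph $G$ with adjacency matrix $A$ and diagonal degree matrix $D$, the signless Laplacian is $Q(G)=D+A$; $q_n(G)$ is its smallest eigenvalue. *)

From mathcomp Require Import all_boot all_order all_algebra.
From mathcomp Require Import classical_sets reals.
Set Implicit Arguments. Unset Strict Implicit. Unset Printing Implicit Defensive.
Import Order.TTheory GRing.Theory Num.Theory.
Local Open Scope ring_scope.

Definition simple_graph (n : nat) (e : rel 'I_n) : Prop :=
  symmetric e /\ irreflexive e.

Definition is_clique (n : nat) (e : rel 'I_n) (S : {set 'I_n}) : Prop :=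
  forall x y, x \in S -> y \in S -> x != y -> e x y.

Definition has_Kk (n : nat) (e : rel 'I_n) (k : nat) : Prop :=
  exists S : {set 'I_n}, #|S| = k /\ is_clique e S.

Definition deg (n : nat) (e : rel 'I_n) (i : 'I_n) : nat := #|[set j | e i j]|.

Definition adjmx (R : realType) (n : nat) (e : rel 'I_n) : 'M[R]_n :=
  \matrix_(i, j) (e i j)%:R.

Definition degmx (R : realType) (n : nat) (e : rel 'I_n) : 'M[R]_n :=
  \matrix_(i, j) ((i == j)%:R * (deg e i)%:R).

Definition signless_laplacian (R : realType) (n : nat) (e : rel 'I_n) : 'M[R]_n :=
  degmx R e + adjmx R e.

(* Smallest eigenvalue of Q(G): the infimum (= minimum, the set being finite
   and nonempty) of the eigenvalues of Q(G). *)
Definition q_min (R : realType) (n : nat) (e : rel 'I_n) : R :=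
  inf [set a : R | eigenvalue (signless_laplacian R e) a].

(* The smallest eigenvalue of Q(G) is at most the Rayleigh quotient x Q x^T / x x^T of
   any nonzero real vector x, and x Q x^T is the sum of (x_i + x_j)^2 over the edges ij.
   If some vertex has degree below the bound, its unit vector already witnesses the
   claim.  Otherwise take a clique K of maximum order k <= r.  For v in K, the vertices
   adjacent to all of K except v form an independent set B_v (an edge inside it would
   extend K \ v to a larger clique), the B_v are pairwise disjoint, and no vertex is
   adjacent to all of K; counting the edges between K and V(G) gives
   sum_(v in K) deg v + 2n <= kn + sum_(v in K) |B_v|.  For the two largest sets
   A = B_a, B = B_b, the vector 1_A - 1_B vanishes on the edges inside A u B, so its
   Rayleigh quotient is at most n - |A u B|, which the degree lower bound makes
   smaller than (1 - 3/(3r-1)) n. *)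

From mathcomp Require Import all_boot all_order all_algebra.
From mathcomp Require Import classical_sets reals.
From mathcomp Require Import complex ring lra zify.
Set Implicit Arguments. Unset Strict Implicit. Unset Printing Implicit Defensive.
Import Order.TTheory GRing.Theory Num.Theory.
Local Open Scope ring_scope.

Lemma sum_indicator (R : nzSemiRingType) (T : finType) (U : {set T}) :
  \sum_x (x \in U)%:R = #|U|%:R :> R.
Proof.
by rewrite -sum1_card natr_sum [RHS]big_mkcond; apply: eq_bigr => x _; case: (x \in U).
Qed.

Lemma card_set_sum (T : finType) (P : pred T) : #|[set x | P x]| = (\sum_x P x)%N.
Proof. by rewrite -sum1dep_card big_mkcond. Qed.

Lemma double_count (T : finType) (P : T -> T -> bool) (K : {set T}) :
  (\sum_(v in K) #|[set w | P v w]| = \sum_w #|[set v in K | P v w]|)%N.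
Proof.
under eq_bigr do rewrite card_set_sum.
rewrite exchange_big /=; apply: eq_bigr => w _.
by rewrite card_set_sum big_mkcond; apply: eq_bigr => v _; case: (v \in K).
Qed.

Lemma sum_le_two_largest (T : finType) (K : {set T}) (f : T -> nat) : (2 <= #|K|)%N ->
  exists a b, [/\ a \in K, b \in K, a != b &
                 2 * \sum_(v in K) f v <= #|K| * (f a + f b)]%N.
Proof.
move=> K_ge2.
have [v0 v0K] : exists v0, v0 \in K by apply/card_gt0P; lia.
have [a aK a_max] := @arg_maxnP _ v0 (fun v => v \in K) f v0K.
have Ka_card : #|K :\ a| = #|K|.-1 by rewrite (cardsD1 a K) aK.
have [v1 v1Ka] : exists v1, v1 \in K :\ a by apply/card_gt0P; lia.
have [b bKa b_max] := @arg_maxnP _ v1 (fun v => v \in K :\ a) f v1Ka.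
move: bKa; rewrite in_setD1 => /andP [ba bK].
exists a, b; split; rewrite // 1?eq_sym //.
have sum_le : (\sum_(v in K) f v <= f a + #|K|.-1 * f b)%N.
  rewrite (big_setD1 a aK) /= -Ka_card -sum_nat_const leq_add2l.
  by apply: leq_sum => v vKa; apply: b_max.
have fba : (#|K|.-2 * f b <= #|K|.-2 * f a)%N by apply: leq_mul => //; apply: a_max.
by move: sum_le fba; case: #|K| K_ge2 => [|[|k]] //= _; nia.
Qed.

Definition qform (R : nzRingType) n (A : 'M[R]_n) (x : 'rV[R]_n) : R :=
  (x *m A *m x^T) 0 0.

Lemma real_complex_real (R : realType) (r : R) : real_complex R r \is Num.real.
Proof. by apply/complex_realP; exists r. Qed.

Section RealSymmetricSpectrum.
Variables (R : realType) (n : nat) (A : 'M[R]_n).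
Hypothesis A_sym : A^T = A.

Local Notation toC := (real_complex R).
Let Ac := map_mx toC A.
Let P := spectralmx Ac.
Let d := spectral_diag Ac.

Lemma map_realsym_hermsym : Ac \is hermsymmx.
Proof.
apply: realsym_hermsym.
  by apply/is_hermitianmxP; rewrite expr0 scale1r map_mx_id // /Ac map_trmx A_sym.
by apply/mxOverP => i j; rewrite mxE real_complex_real.
Qed.

Lemma spectral_decomposition : Ac = (P ^t*)%sesqui *m diag_mx d *m P.
Proof.
rewrite -invmx_unitary ?spectral_unitarymx //.
exact/orthomx_spectralP/hermitian_normalmx/map_realsym_hermsym.
Qed.

Let P_unitary : P \is unitarymx.
Proof. exact: spectral_unitarymx. Qed.

Lemma spectral_diag_eigenvalue j : exists2 a, eigenvalue A a & d 0 j = toC a.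
Proof.
have /mxOverP/(_ 0 j)/complex_realP [a da] :=
  hermitian_spectral_diag_real map_realsym_hermsym.
exists a => //.
rewrite eigenvalue_root_char -(fmorph_root toC) map_char_poly /= -/Ac -da -/d.
rewrite -eigenvalue_root_char; apply/eigenvalueP; exists (row j P).
  rewrite -row_mul spectral_decomposition !mulmxA (unitarymxP P_unitary) mul1mx.
  by apply/rowP => k; rewrite mul_diag_mx !mxE.
apply/eqP => Pj0; move/rowP/(_ j): (congr1 (row j) (unitarymxP P_unitary)).
by rewrite row_mul Pj0 mul0mx !mxE eqxx => /esym/eqP; rewrite oner_eq0.
Qed.

Lemma qform_spectral (x : 'rV[R]_n) (w := map_mx toC x *m (P ^t*)%sesqui) :
  toC (qform A x) = \sum_j w 0 j * (w 0 j)^* * d 0 j /\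
  toC ((x *m x^T) 0 0) = \sum_j w 0 j * (w 0 j)^*.
Proof.
have xT : (map_mx toC x ^t*)%sesqui = map_mx toC x^T.
  by apply/matrixP => i j; rewrite !mxE conj_Creal ?real_complex_real.
have wT : (w ^t*)%sesqui = P *m (map_mx toC x ^t*)%sesqui.
  apply/matrixP => i j; rewrite !mxE rmorph_sum; apply: eq_bigr => k _.
  by rewrite !mxE rmorphM /= conjCK mulrC.
have -> : toC (qform A x) = (w *m diag_mx d *m (w ^t*)%sesqui) 0 0.
  have -> : toC (qform A x) = (map_mx toC x *m Ac *m (map_mx toC x ^t*)%sesqui) 0 0.
    by rewrite xT -!map_mxM mxE.
  by rewrite spectral_decomposition wT /w !mulmxA.
have -> : toC ((x *m x^T) 0 0) = (w *m (w ^t*)%sesqui) 0 0.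
  by rewrite wT /w !mulmxA mulmxKtV // xT -map_mxM [RHS]mxE.
by split; rewrite mxE; apply: eq_bigr => j _; rewrite ?mul_mx_diag !mxE // mulrAC.
Qed.

Lemma eigenvalue_lt_of_qform_lt (x : 'rV[R]_n) (c : R) :
  qform A x < c * (x *m x^T) 0 0 -> exists2 a, eigenvalue A a & a < c.
Proof.
move=> Axc; have [qAx qx] := qform_spectral x.
have [/forallP cd|] := boolP [forall j, toC c <= d 0 j].
  move: Axc; rewrite -ltcR rmorphM /= qAx qx mulr_sumr le_gtF //.
  by apply: ler_sum => j _; rewrite mulrC ler_wpM2l ?mul_conjC_ge0.
rewrite negb_forall => /existsP [j /negP cdj].
have [a Aa da] := spectral_diag_eigenvalue j.
by exists a; rewrite // ltNge -lecR -da; apply/negP.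
Qed.

End RealSymmetricSpectrum.

Lemma qformE (R : comNzRingType) n (A : 'M[R]_n) (x : 'rV[R]_n) :
  qform A x = \sum_i \sum_j x 0 i * A i j * x 0 j.
Proof.
rewrite /qform mxE exchange_big; apply: eq_bigr => j _.
by rewrite !mxE mulr_suml.
Qed.

Lemma mulmx_trmx_gt0 (R : realDomainType) n (x : 'rV[R]_n) :
  x != 0 -> 0 < (x *m x^T) 0 0.
Proof.
move=> x_neq0; have [j xj] : exists j, x 0 j != 0.
  apply/existsP; move: x_neq0; apply: contraNT => /existsPn x0.
  by apply/eqP/rowP => j; rewrite mxE; exact/eqP/negPn/x0.
rewrite mxE (bigD1 j) //=; apply: ltr_pwDl.
- by rewrite ?mxE -expr2 lt_def sqrf_eq0 xj sqr_ge0.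
- by apply: sumr_ge0 => i _; rewrite ?mxE -expr2 sqr_ge0.
Qed.

Section Cliques.
Variables (n : nat) (e : rel 'I_n).
Hypotheses (e_sym : symmetric e) (e_irr : irreflexive e).

Definition cliqueb (S : {set 'I_n}) :=
  [forall x in S, forall y in S, (x != y) ==> e x y].

Lemma cliqueP (S : {set 'I_n}) : reflect (is_clique e S) (cliqueb S).
Proof.
apply: (iffP forall_inP) => [S_cl x y xS yS | S_cl x xS].
  by move/forall_inP/(_ y yS)/implyP: (S_cl x xS); apply.
by apply/forall_inP => y yS; apply/implyP; apply: S_cl.
Qed.

Lemma clique_subset (S T : {set 'I_n}) :
  S \subset T -> is_clique e T -> is_clique e S.
Proof. by move=> /fintype.subsetP ST T_cl x y /ST xT /ST; apply: T_cl. Qed.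

Lemma clique_setU1 (S : {set 'I_n}) a :
  is_clique e S -> {in S, forall y, e a y} -> is_clique e (a |: S).
Proof.
move=> S_cl a_adj x y; rewrite !in_setU1.
case/orP => [/eqP-> | xS]; case/orP => [/eqP-> | yS] //; first by rewrite eqxx.
- by move=> _; apply: a_adj.
- by move=> _; rewrite e_sym; apply: a_adj.
- exact: S_cl.
Qed.

Lemma exists_max_clique r : ~ has_Kk e r.+1 -> (2 <= r)%N -> (exists u v, e u v) ->
  exists2 K : {set 'I_n}, is_clique e K /\ (2 <= #|K| <= r)%N &
    forall S, is_clique e S -> #|S| != #|K|.+1.
Proof.
move=> noK r_ge2 [u [v uv]].
pose has_clique k := [exists S : {set 'I_n}, (#|S| == k) && cliqueb S] && (k <= r)%N.
have has2 : has_clique 2%N.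
  rewrite /has_clique r_ge2 andbT; apply/existsP; exists [set u; v].
  have u_neq_v : u != v by apply: contraTneq uv => ->; rewrite e_irr.
  rewrite cards2 u_neq_v eqxx /=; apply/cliqueP => x y; rewrite !inE.
  by case/orP => /eqP->; case/orP => /eqP->; rewrite ?eqxx // e_sym.
have has_clique_le k : has_clique k -> (k <= r)%N by case/andP.
have [k /andP [/existsP [K /andP [/eqP <- /cliqueP K_cl]] K_le] K_max] :=
  ex_maxnP (ex_intro has_clique 2%N has2) has_clique_le.
exists K; first by split; last by rewrite K_le andbT K_max.
move=> S S_cl; apply/eqP => S_card; have [K_lt | K_eq] := ltnP #|K| r.
  have : has_clique #|K|.+1.
    rewrite /has_clique K_lt andbT; apply/existsP; exists S.
    by rewrite S_card eqxx; apply/cliqueP.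
  by move/K_max; rewrite ltnn.
by apply: noK; exists S; split => //; apply/eqP; rewrite S_card eqSS eqn_leq K_le.
Qed.

Definition independent (S : {set 'I_n}) := forall u v, u \in S -> v \in S -> ~~ e u v.

Definition nbhd_but (K : {set 'I_n}) v :=
  [set w | ~~ e w v & [forall u in K :\ v, e w u]].

Lemma nbhd_butP K v w :
  reflect (~~ e w v /\ {in K :\ v, forall u, e w u}) (w \in nbhd_but K v).
Proof. by rewrite inE; apply: (iffP andP) => -[wv /forall_inP]. Qed.

Section MaximumClique.
Variable K : {set 'I_n}.
Hypotheses (K_cl : is_clique e K) (K_max : forall S, is_clique e S -> #|S| != #|K|.+1).

Lemma not_adj_clique w : ~ {in K, forall u, e w u}.
Proof.
move=> w_adj; have w_notin : w \notin K by apply/negP => /w_adj; rewrite e_irr.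
by move/negP: (K_max (clique_setU1 K_cl w_adj)); rewrite cardsU1 w_notin.
Qed.

Lemma nbhd_but_independent v : v \in K -> independent (nbhd_but K v).
Proof.
move=> vK w w' /nbhd_butP [_ w_adj] /nbhd_butP [_ w'_adj]; apply/negP => ww'.
have notin u : {in K :\ v, forall y, e u y} -> u \notin K :\ v.
  by move=> u_adj; apply/negP => /u_adj; rewrite e_irr.
have w_notin : w \notin w' |: (K :\ v).
  rewrite in_setU1 negb_or notin // andbT.
  by apply: contraTneq ww' => ->; rewrite e_irr.
have S_cl : is_clique e (w |: (w' |: (K :\ v))).
  apply: clique_setU1; first exact: clique_setU1 (clique_subset (subsetDl _ _) K_cl) w'_adj.
  by move=> y; rewrite in_setU1 => /orP [/eqP -> // | /w_adj].
move/negP: (K_max S_cl).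
by rewrite cardsU1 w_notin cardsU1 notin // (cardsD1 v K) vK !add1n eqxx.
Qed.

Lemma nbhd_but_disjoint u v : v \in K -> u != v ->
  [disjoint nbhd_but K u & nbhd_but K v].
Proof.
move=> vK uv; rewrite -setI_eq0; apply/eqP/setP => w; rewrite finset.in_setI finset.in_set0.
apply/negbTE/andP => -[/nbhd_butP [_ w_adj] /nbhd_butP [wv _]].
by move: wv; rewrite w_adj // in_setD1 eq_sym uv.
Qed.

Lemma adj_count_le w : (#|[set v in K | e v w]| + 2 <=
  #|K| + #|[set v in K | w \in nbhd_but K v]|)%N.
Proof.
set M := [set v in K | ~~ e v w].
have card_split : (#|[set v in K | e v w]| + #|M|)%N = #|K|.
  have -> : [set v in K | e v w] = K :&: [set v | e v w] by apply/setP => v; rewrite !inE.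
  have -> : M = K :\: [set v | e v w] by apply/setP => v; rewrite !inE andbC.
  exact: cardsID.
case M_card : #|M| => [|[|m]].
- exfalso; apply: (not_adj_clique (w := w)) => u uK.
  move/cards0_eq/setP/(_ u): M_card; rewrite !inE uK e_sym.
  by case: (e w u).
- have /cards1P [v0 M_eq] : #|M| == 1%N by rewrite M_card.
  have : v0 \in M by rewrite M_eq set11.
  rewrite inE => /andP [v0K v0w].
  have w_in : w \in nbhd_but K v0.
    apply/nbhd_butP; split; first by rewrite e_sym.
    move=> u; rewrite in_setD1 => /andP [uv0 uK]; rewrite e_sym.
    apply/negPn/negP => uw.
    have : u \in M by rewrite inE uK uw.
    by rewrite M_eq inE (negbTE uv0).
  have : (0 < #|[set v in K | w \in nbhd_but K v]|)%N.
    by apply/card_gt0P; exists v0; rewrite inE v0K w_in.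
  lia.
- lia.
Qed.

Lemma sum_deg_clique :
  ((\sum_(v in K) deg e v) + 2 * n <= #|K| * n + \sum_(v in K) #|nbhd_but K v|)%N.
Proof.
have deg_count : (\sum_(v in K) deg e v = \sum_w #|[set v in K | e v w]|)%N.
  exact: double_count.
have nbhd_count :
    (\sum_(v in K) #|nbhd_but K v| = \sum_w #|[set v in K | w \in nbhd_but K v]|)%N.
  rewrite -double_count; apply: eq_bigr => v _.
  by apply: eq_card => w; rewrite inE.
have : (\sum_w (#|[set v in K | e v w]| + 2) <=
        \sum_w (#|K| + #|[set v in K | w \in nbhd_but K v]|))%N.
  by apply: leq_sum => w _; apply: adj_count_le.
by rewrite deg_count nbhd_count !big_split /= !sum_nat_const !card_ord; lia.
Qed.

Lemma exists_independent_pair : (2 <= #|K|)%N ->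
  exists A B : {set 'I_n}, [/\ [disjoint A & B], independent A, independent B &
    2 * (\sum_(v in K) deg e v) + 4 * n <= 2 * #|K| * n + #|K| * #|A :|: B|]%N.
Proof.
move=> K_ge2.
have [a [b [aK bK ab sum_le]]] := sum_le_two_largest (fun v => #|nbhd_but K v|) K_ge2.
have ab_dis := nbhd_but_disjoint bK ab.
exists (nbhd_but K a), (nbhd_but K b); split => //; try exact: nbhd_but_independent.
move: sum_le (sum_deg_clique) => /=; rewrite cardsU (disjoint_setI0 ab_dis) cards0 subn0.
(* The [set]s merge cardinals built over different [finType] instances of ['I_n],
   which [lia] would otherwise see as distinct atoms. *)
set k := #|K|; set ca := #|nbhd_but K a|; set cb := #|nbhd_but K b|.
set d := (\sum_(v in K) deg e v)%N; set s := (\sum_(v in K) #|nbhd_but K v|)%N; lia.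
Qed.

End MaximumClique.

End Cliques.

Section SignlessLaplacian.
Variables (R : realType) (n : nat) (e : rel 'I_n).
Hypothesis e_sym : symmetric e.
Local Notation Q := (signless_laplacian R e).

Lemma natr_deg i : (deg e i)%:R = \sum_j (e i j)%:R :> R.
Proof. by rewrite /deg -sum_indicator; apply: eq_bigr => j _; rewrite inE. Qed.

Lemma signless_laplacian_sym : Q^T = Q.
Proof.
apply/matrixP => i j; rewrite !mxE e_sym eq_sym.
by case: eqP => [->|]; rewrite ?mul0r.
Qed.

Lemma qform_signless_laplacian (x : 'rV[R]_n) :
  qform Q x *+ 2 = \sum_i \sum_j (e i j)%:R * (x 0 i + x 0 j) ^+ 2.
Proof.
have deg_term : \sum_i \sum_j x 0 i * ((i == j)%:R * (deg e i)%:R) * x 0 j =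
                \sum_i \sum_j (e i j)%:R * x 0 i ^+ 2.
  apply: eq_bigr => i _; rewrite (bigD1 i) //= big1 ?addr0 => [|j ji].
  - by rewrite eqxx mul1r natr_deg mulr_sumr mulr_suml; apply: eq_bigr => j _; ring.
  - by rewrite eq_sym (negbTE ji) !mul0r mulr0 mul0r.
have deg_term_sym : \sum_i \sum_j (e i j)%:R * x 0 i ^+ 2 =
                    \sum_i \sum_j (e i j)%:R * x 0 j ^+ 2 :> R.
  by rewrite exchange_big; apply: eq_bigr => i _; apply: eq_bigr => j _; rewrite e_sym.
have split_qform : qform Q x = \sum_i \sum_j (e i j)%:R * x 0 i ^+ 2 +
                               \sum_i \sum_j (e i j)%:R * (x 0 i * x 0 j).
  rewrite qformE -deg_term -big_split; apply: eq_bigr => i _.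
  by rewrite -big_split; apply: eq_bigr => j _; rewrite !mxE /=; ring.
have split_rhs : \sum_i \sum_j (e i j)%:R * (x 0 i + x 0 j) ^+ 2 =
    \sum_i \sum_j (e i j)%:R * x 0 i ^+ 2 + \sum_i \sum_j (e i j)%:R * x 0 j ^+ 2 +
    (\sum_i \sum_j (e i j)%:R * (x 0 i * x 0 j)) *+ 2 :> R.
  rewrite -sumrMnl -!big_split; apply: eq_bigr => i _.
  by rewrite -sumrMnl -!big_split; apply: eq_bigr => j _ /=; ring.
by rewrite split_qform split_rhs -deg_term_sym; ring.
Qed.

Lemma signless_laplacian_eigenvalue_ge0 a : eigenvalue Q a -> 0 <= a.
Proof.
move=> /eigenvalueP [v va v_neq0].
have qv : qform Q v = a * (v *m v^T) 0 0 by rewrite /qform va -scalemxAl mxE.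
have : 0 <= qform Q v *+ 2.
  rewrite qform_signless_laplacian; do 2!apply: sumr_ge0 => ? _.
  by rewrite mulr_ge0 ?sqr_ge0.
by rewrite qv pmulrn_lge0 // pmulr_lge0 // mulmx_trmx_gt0.
Qed.

Lemma qform_delta (e_irr : irreflexive e) v (x := delta_mx 0 v : 'rV[R]_n) :
  qform Q x = (deg e v)%:R /\ (x *m x^T) 0 0 = 1.
Proof.
by rewrite /qform /x trmx_delta -!rowE -!colE !mxE eqxx e_irr mul1r addr0.
Qed.

Lemma qform_signed_indicator (A B : {set 'I_n}) :
  [disjoint A & B] -> independent e A -> independent e B ->
  let x := \row_w ((w \in A)%:R - (w \in B)%:R) : 'rV[R]_n in
  qform Q x <= #|A :|: B|%:R * (n - #|A :|: B|)%:R /\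
  (x *m x^T) 0 0 = #|A :|: B|%:R.
Proof.
move=> AB_dis A_ind B_ind x; set U := A :|: B.
have notAB w : w \in A -> w \in B -> False by move=> /(disjointFr AB_dis) ->.
have edge_le i j : (e i j)%:R * (x 0 i + x 0 j) ^+ 2 <=
    (i \in U)%:R * (j \in ~: U)%:R + (i \in ~: U)%:R * (j \in U)%:R :> R.
  rewrite !mxE /U !inE.
  have := notAB i; have := notAB j; have := A_ind i j; have := B_ind i j.
  case: (i \in A); case: (i \in B); case: (j \in A); case: (j \in B); case: (e i j);
    move=> /= h1 h2 h3 h4; rewrite ?expr2;
    try (by exfalso; [apply: h3 | apply: h4]);
    try (by move: (h1 isT isT)); try (by move: (h2 isT isT)); lra.
have cut_count : \sum_i \sum_j
    ((i \in U)%:R * (j \in ~: U)%:R + (i \in ~: U)%:R * (j \in U)%:R) =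
    (#|U|%:R * (n - #|U|)%:R) *+ 2 :> R.
  have cardUC : #|~: U| = (n - #|U|)%N by have := cardsC U; rewrite card_ord; lia.
  rewrite (eq_bigr (fun i => (i \in U)%:R * #|~: U|%:R + (i \in ~: U)%:R * #|U|%:R));
    last by move=> i _; rewrite big_split /= -!mulr_sumr !sum_indicator.
  by rewrite big_split /= -!mulr_suml !sum_indicator cardUC mulr2n [in X in _ + X]mulrC.
split.
  rewrite -(ler_pMn2r (_ : 0 < 2)%N) // -cut_count qform_signless_laplacian.
  by do 2!apply: ler_sum => ? _; apply: edge_le.
rewrite mxE -sum_indicator; apply: eq_bigr => j _; rewrite !mxE /U !inE.
by have := notAB j; case: (j \in A); case: (j \in B) => /= h; rewrite ?expr2; try lra; case: h.
Qed.

End SignlessLaplacian.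

Definition clique_free_bound (R : numFieldType) (n r : nat) : R :=
  (1 - 3 / (3 * r%:R - 1)) * n%:R.

Lemma clique_free_bound_gt0 (R : realFieldType) n r : (3 <= r)%N -> (0 < n)%N ->
  0 < clique_free_bound R n r < n%:R.
Proof.
move=> r_ge3 n_gt0; rewrite -(ler_nat R 3) in r_ge3; rewrite -(ltr0n R) in n_gt0.
have frac_pos : 0 < 3 / (3 * r%:R - 1) :> R by rewrite divr_gt0 //; lra.
have frac_lt1 : 3 / (3 * r%:R - 1) < 1 :> R by rewrite ltr_pdivrMr; lra.
by rewrite mulr_gt0 ?subr_gt0 //= gtr_pMl // ltrBlDr ltrDl.
Qed.

Lemma clique_free_bound_lt (R : realFieldType) n r (k u D : R) :
  (3 <= r)%N -> (0 < n)%N -> 2 <= k <= r%:R ->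
  k * clique_free_bound R n r <= D -> 2 * D + 4 * n%:R <= 2 * k * n%:R + k * u ->
  n%:R - u < clique_free_bound R n r.
Proof.
rewrite /clique_free_bound -(ler_nat R 3) -(ltr0n R).
move=> r_ge3 n_gt0 /andP [k_ge2 k_le]; set c := (1 - _) * _ => c_le bound.
have r_pos : 0 < 3 * r%:R - 1 :> R by lra.
have c_eq : c * (3 * r%:R - 1) = (3 * r%:R - 4) * n%:R by rewrite /c; field; lra.
have n_c : 3 * k * n%:R - 4 * n%:R < 3 * k * c.
  rewrite -(ltr_pM2r r_pos) -[3 * k * c * _]mulrA c_eq.
  have -> : 3 * k * ((3 * r%:R - 4) * n%:R) = (3 * k * n%:R - 4 * n%:R) * (3 * r%:R - 1)
                                              + (12 * r%:R - 9 * k - 4) * n%:R by ring.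
  by rewrite ltrDl mulr_gt0 //; lra.
rewrite -(ltr_pM2l (_ : 0 < k)); lra.
Qed.

Lemma exists_qform_lt_of_min_deg (R : realType) n r (e : rel 'I_n) :
  (3 <= r)%N -> (0 < n)%N -> simple_graph e -> ~ has_Kk e r.+1 ->
  (forall v, clique_free_bound R n r <= (deg e v)%:R) ->
  exists x : 'rV[R]_n,
    qform (signless_laplacian R e) x < clique_free_bound R n r * (x *m x^T) 0 0.
Proof.
move=> r_ge3 n_gt0 [e_sym e_irr] noK deg_ge.
have /andP [c_pos c_lt_n] := clique_free_bound_gt0 R r_ge3 n_gt0.
set c := clique_free_bound R n r in deg_ge c_pos c_lt_n *.
have edge : exists u v, e u v.
  have /card_gt0P [u] : (0 < deg e (Ordinal n_gt0))%N.
    by rewrite -(ltr0n R); apply: lt_le_trans c_pos (deg_ge _).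
  by rewrite inE; exists (Ordinal n_gt0), u.
have [K [K_cl K_range] K_max] :=
  exists_max_clique e_sym e_irr noK (ltnW r_ge3) edge.
have K_rangeR : 2 <= (#|K|%:R : R) <= r%:R by rewrite (ler_nat R 2) ler_nat.
have [A [B [AB_dis A_ind B_ind bound]]] :=
  exists_independent_pair e_sym e_irr K_cl K_max (proj1 (andP K_range)).
have [qx_le x_norm] := qform_signed_indicator R e_sym AB_dis A_ind B_ind.
exists (\row_w ((w \in A)%:R - (w \in B)%:R)); rewrite x_norm.
have deg_sum : #|K|%:R * c <= (\sum_(v in K) deg e v)%:R.
  by rewrite natr_sum mulr_natl -sumr_const; apply: ler_sum.
move: bound; rewrite -(ler_nat R) natrD [in X in _ <= X]natrD !natrM => bound.
have n_u : n%:R - #|A :|: B|%:R < c :=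
  clique_free_bound_lt r_ge3 n_gt0 K_rangeR deg_sum bound.
have U_pos : 0 < #|A :|: B|%:R :> R by lra.
have U_le : (#|A :|: B| <= n)%N by have := max_card (mem (A :|: B)); rewrite card_ord.
by apply: le_lt_trans qx_le _; rewrite natrB // [c * _]mulrC ltr_pM2l.
Qed.

Lemma exists_qform_lt (R : realType) n r (e : rel 'I_n) :
  (3 <= r)%N -> (0 < n)%N -> simple_graph e -> ~ has_Kk e r.+1 ->
  exists x : 'rV[R]_n,
    qform (signless_laplacian R e) x < clique_free_bound R n r * (x *m x^T) 0 0.
Proof.
move=> r_ge3 n_gt0 G noK.
have [/existsP [v deg_v] | /existsPn deg_ge] :=
  boolP [exists v, (deg e v)%:R < clique_free_bound R n r].
  by exists (delta_mx 0 v); have [-> ->] := qform_delta R G.2 v; rewrite mulr1.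
by apply: exists_qform_lt_of_min_deg => // v; rewrite leNgt deg_ge.
Qed.

Theorem theorem6 (R : realType) (n r : nat) (e : rel 'I_n) :
  (3 <= r)%N -> (1 <= n)%N -> simple_graph e -> ~ has_Kk e r.+1 ->
  q_min R e < (1 - 3 / (3 * r%:R - 1)) * n%:R.
Proof.
move=> r_ge3 n_ge1 G noK; have [e_sym _] := G.
have [x x_lt] := exists_qform_lt R r_ge3 n_ge1 G noK.
have [a Qa a_lt] := eigenvalue_lt_of_qform_lt (signless_laplacian_sym R e_sym) x_lt.
apply: le_lt_trans a_lt; apply: ge_inf Qa.
by exists 0 => b; apply: signless_laplacian_eigenvalue_ge0.
Qed.
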